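(* Let $p\ge 1$ and let $u,v,w\in E^p$. Then for every $\alpha\in[0,1]$, $$D(\alpha u+(1-\alpha)v,\,w)\le \sqrt{2}\,\max\{D(u,w),D(v,w)\}.$$
   Context: A fuzzy subset of $\mathbb{R}^p$ is a function $u:\mathbb{R}^p\to[0,1]$. Its $\alpha$-cut is $[u]_\alpha=\{x\in\mathbb{R}^p: u(x)\ge\alpha\}$ for $\alpha\in(0,1]$, and $[u]_0=\overline{\{x\in\mathbb{R}^p: u(x)>0\}}$. The set $E^p$ of $p$-dimensional fuzzy numbers consists of all fuzzy subsets $u$ of $\mathbb{R}^p$ such that $[u]_\alpha$ is a nonempty compact convex subset of $\mathbb{R}^p$ for every $\alpha\in[0,1]$. For $u,v\in E^p$ and $r\in\mathbb{R}$, $u+v$ and $r\cdot u$ are the elements of $E^p$ determined by $[u+v]_\alpha=\{x+y: x\in[u]_\alpha,\ y\in[v]_\alpha\}$ and $[r\cdot u]_\alpha=\{rx: x\in[u]_\alpha\}$ for all $\alpha\in[0,1]$. The sendograph of $u\in E^p$ is $\mathrm{send}\,u=\{(x,\alpha)\in[u]_0\times[0,1]: u(x)\ge\alpha\}\subset\mathbb{R}^{p+1}$. For nonempty compact $U,V\subset\mathbb{R}^{p+1}$ (with the Euclidean metric $d$), the Hausdorff metric is $H(U,V)=\max\{H^*(U,V),H^*(V,U)\}$ with $H^*(U,V)=\sup_{a\in U}\inf_{b\in V}d(a,b)$. The sendograph metric on $E^p$ is $D(u,v)=H(\mathrm{send}\,u,\mathrm{send}\,v)$. *)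

From HB Require Import structures.
From mathcomp Require Import all_boot all_order all_algebra.
From mathcomp Require Import all_classical all_reals topology normedtype.
Set Implicit Arguments. Unset Strict Implicit. Unset Printing Implicit Defensive.
Import Order.TTheory GRing.Theory Num.Theory.
Import numFieldNormedType.Exports.
Local Open Scope classical_set_scope.
Local Open Scope ring_scope.

Section Fuzzy.
Variables (R : realType) (p : nat).

Definition pt := 'rV[R]_p.

Definition fuzzy_set (u : pt -> R) : Prop := forall x, 0 <= u x <= 1.

Definition cut (u : pt -> R) (a : R) : set pt :=
  if 0 < a then [set x | a <= u x] else closure [set x | 0 < u x].

Definition convex_set (S : set pt) : Prop :=
  forall x y t, S x -> S y -> 0 <= t <= 1 -> S (t *: x + (1 - t) *: y).

Definition fuzzy_number (u : pt -> R) : Prop :=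
  fuzzy_set u /\
  forall a, 0 <= a <= 1 ->
    cut u a !=set0 /\ compact (cut u a) /\ convex_set (cut u a).

Definition set_add (A B : set pt) : set pt :=
  [set z | exists2 x, A x & exists2 y, B y & z = x + y].
Definition set_scale (r : R) (A : set pt) : set pt := (fun x => r *: x) @` A.

Definition is_fuzzy_add (u v s : pt -> R) : Prop :=
  fuzzy_set s /\ forall a, 0 <= a <= 1 -> cut s a = set_add (cut u a) (cut v a).

Definition is_fuzzy_scale (r : R) (u s : pt -> R) : Prop :=
  fuzzy_set s /\ forall a, 0 <= a <= 1 -> cut s a = set_scale r (cut u a).

Definition edist (a b : pt * R) : R :=
  Num.sqrt (\sum_(i < p) (a.1 ord0 i - b.1 ord0 i) ^+ 2 + (a.2 - b.2) ^+ 2).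

Definition sendograph (u : pt -> R) : set (pt * R) :=
  [set xa | cut u 0 xa.1 /\ 0 <= xa.2 <= 1 /\ xa.2 <= u xa.1].

Definition hausdorff_half (U V : set (pt * R)) : R :=
  sup [set r | exists2 a, U a & r = inf [set d | exists2 b, V b & d = edist a b]].

Definition hausdorff (U V : set (pt * R)) : R :=
  Num.max (hausdorff_half U V) (hausdorff_half V U).

Definition send_metric (u v : pt -> R) : R := hausdorff (sendograph u) (sendograph v).

End Fuzzy.

From Pilot Require Import Defs.
From HB Require Import structures.
From mathcomp Require Import all_boot all_order all_algebra.
From mathcomp Require Import all_classical all_reals topology normedtype.
From mathcomp Require Import ring.
Import Order.TTheory GRing.Theory Num.Theory.
Import numFieldNormedType.Exports.
Local Open Scope classical_set_scope.
Local Open Scope ring_scope.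

(* A point (x, t) of send (alpha u + (1 - alpha) v) is (alpha y + (1 - alpha) z, t)
   with (y, t) in send u and (z, t) in send v.  Take points (y', t1), (z', t2) of
   send w nearly realising the distances of (y, t), (z, t) to send w.  As the
   cuts of w are nested and convex, (alpha y' + (1 - alpha) z', min t1 t2) lies in
   send w, and its squared distance to (x, t) is at most the sum of the two
   squared distances: the square is convex in the coordinates, and min t1 t2 is
   one of t1, t2 in the level.  So that distance is at most sqrt 2 times the
   larger one.  The other half of the Hausdorff distance is symmetric: points
   of send u and send v near a point of send w combine into a point of
   send (alpha u + (1 - alpha) v). *)


Section RealBounds.
Context {R : realType}.

Lemma sqr_le_of_norm_le (x c : R) : `|x| <= c -> x ^+ 2 <= c ^+ 2.
Proof.
move=> xc; rewrite -(real_normK (num_real x)).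
by rewrite ler_sqr ?nnegrE // (le_trans _ xc).
Qed.

Lemma sqrB_le_sqrD (x y a b : R) : `|x| <= a -> `|y| <= b -> (x - y) ^+ 2 <= (a + b) ^+ 2.
Proof. by move=> xa yb; apply/sqr_le_of_norm_le/(le_trans (ler_normB x y))/lerD. Qed.

Lemma convex_sqr_le (al e f : R) : 0 <= al <= 1 ->
  (al * e + (1 - al) * f) ^+ 2 <= e ^+ 2 + f ^+ 2.
Proof.
move=> /andP[al0 al1].
have -> : e ^+ 2 + f ^+ 2 = (al * e + (1 - al) * f) ^+ 2
    + (al * (1 - al) * (e - f) ^+ 2 + (1 - al) * e ^+ 2 + al * f ^+ 2) by ring.
have al'0 : 0 <= 1 - al by rewrite subr_ge0.
by rewrite lerDl !addr_ge0 // mulr_ge0 ?sqr_ge0 // mulr_ge0.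
Qed.

Lemma normr_mx_coord_le {m n} (A : 'M[R]_(m, n)) i j : `|A i j| <= `|A|.
Proof.
rewrite [X in _ <= X]/Num.norm /= mx_normrE.
exact: (le_bigmax _ (fun ij : 'I_m * 'I_n => `|A ij.1 ij.2|) (i, j)).
Qed.

End RealBounds.

Section Sendograph.
Context {R : realType} {p : nat}.
Implicit Types (u v w s : pt R p -> R) (U V : set (pt R p * R)).

Definition sqdist (a b : pt R p * R) : R :=
  \sum_(i < p) (a.1 ord0 i - b.1 ord0 i) ^+ 2 + (a.2 - b.2) ^+ 2.

Lemma sqdist_ge0 a b : 0 <= sqdist a b.
Proof. by rewrite addr_ge0 ?sqr_ge0 // sumr_ge0 // => i _; rewrite sqr_ge0. Qed.

Lemma edistE a b : Defs.edist a b = Num.sqrt (sqdist a b).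
Proof. by []. Qed.

Lemma sqdist_le_of_edist_le a b c : Defs.edist a b <= c -> sqdist a b <= c ^+ 2.
Proof.
rewrite edistE => h; rewrite -(sqr_sqrtr (sqdist_ge0 a b)).
by apply: sqr_le_of_norm_le; rewrite ger0_norm ?sqrtr_ge0.
Qed.

Lemma sqdist_convex_le (al : R) (y z y' z' : pt R p) t t1 t2 : 0 <= al <= 1 ->
  sqdist (al *: y + (1 - al) *: z, t) (al *: y' + (1 - al) *: z', Num.min t1 t2)
  <= sqdist (y, t) (y', t1) + sqdist (z, t) (z', t2).
Proof.
move=> al01; rewrite /sqdist /= addrACA; apply: lerD.
  rewrite -big_split /=; apply: ler_sum => i _; rewrite !mxE.
  rewrite (_ : _ - _ = al * (y ord0 i - y' ord0 i) + (1 - al) * (z ord0 i - z' ord0 i));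
    by [apply: convex_sqr_le | ring].
by rewrite minEle; case: ifP => _; rewrite ?lerDl ?lerDr sqr_ge0.
Qed.

Lemma edist_le_sqrt2 (M e : R) (a b a1 b1 a2 b2 : pt R p * R) : 0 <= M -> 0 < e ->
  sqdist a b <= sqdist a1 b1 + sqdist a2 b2 ->
  Defs.edist a1 b1 <= M + e / Num.sqrt 2 -> Defs.edist a2 b2 <= M + e / Num.sqrt 2 ->
  Defs.edist a b <= Num.sqrt 2 * M + e.
Proof.
move=> M0 e0 hab /sqdist_le_of_edist_le h1 /sqdist_le_of_edist_le h2.
have s2 : 0 < Num.sqrt 2 :> R by rewrite sqrtr_gt0 ltr0n.
have Me0 : 0 <= M + e / Num.sqrt 2 by rewrite addr_ge0 // ltW // divr_gt0.
rewrite edistE; apply: le_trans (ler_wsqrtr (le_trans hab (lerD h1 h2))) _.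
set c := M + e / Num.sqrt 2 in Me0 *.
have -> : c ^+ 2 + c ^+ 2 = 2 * c ^+ 2 by ring.
rewrite sqrtrM ?ler0n // sqrtr_sqr ger0_norm // /c.
by rewrite mulrDr mulrCA divff ?mulr1 // gt_eqF.
Qed.

Definition edists V a : set R := [set d | exists2 b, V b & d = Defs.edist a b].

Lemma edists_lbound V a : lbound (edists V a) 0.
Proof. by move=> d [b _ ->]; exact: sqrtr_ge0. Qed.

Lemma hausdorff_halfE U V :
  hausdorff_half U V = sup [set r | exists2 a, U a & r = inf (edists V a)].
Proof. by []. Qed.

Lemma inf_edists_ge0 V a : 0 <= inf (edists V a).
Proof.
have [ne|/set0P/negP/negbNE/eqP->] := pselect (edists V a !=set0).
  exact: lb_le_inf (edists_lbound V a).
by rewrite inf0.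
Qed.

Lemma inf_edists_le {V} a {b} : V b -> inf (edists V a) <= Defs.edist a b.
Proof. by move=> Vb; apply: ge_inf; [exists 0; exact: edists_lbound | exists b]. Qed.

Lemma hausdorff_half_ge0 U V : 0 <= hausdorff_half U V.
Proof.
rewrite hausdorff_halfE; set A := [set r | _].
have [[[r Ar] ubA]|supA] := pselect (has_sup A); last by rewrite sup_out.
apply: le_trans (ub_le_sup ubA Ar).
by case: Ar => a _ ->; exact: inf_edists_ge0.
Qed.

Definition hausdorff_half_adherent U V := forall a e, U a -> 0 < e ->
  exists2 b, V b & Defs.edist a b < hausdorff_half U V + e.

Lemma hausdorff_half_adherent_of_bounded U V b0 K : V b0 ->
  (forall a, U a -> Defs.edist a b0 <= K) -> hausdorff_half_adherent U V.
Proof.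
move=> Vb0 Kb0 a e Ua e0.
have infa : has_inf (edists V a).
  by split; [exists (Defs.edist a b0), b0 | exists 0; exact: edists_lbound].
have [_ [b Vb ->] hb] := inf_adherent e0 infa.
exists b => //; apply: (lt_le_trans hb); rewrite lerD2r hausdorff_halfE.
apply: ub_le_sup; last by exists a.
by exists K => _ [a' Ua' ->]; exact: le_trans (inf_edists_le a' Vb0) (Kb0 _ Ua').
Qed.

Lemma hausdorff_half_le U V c : 0 <= c ->
  (forall a, U a -> forall e, 0 < e -> exists2 b, V b & Defs.edist a b <= c + e) ->
  hausdorff_half U V <= c.
Proof.
move=> c0 Uc; rewrite hausdorff_halfE; set A := [set r | _].
have [neA|/set0P/negP/negbNE/eqP->] := pselect (A !=set0); last by rewrite sup0.
apply: ge_sup => // _ [a Ua ->]; apply/ler_addgt0Pr => e e0.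
by have [b Vb hb] := Uc a Ua e e0; exact: le_trans (inf_edists_le a Vb) hb.
Qed.

Lemma hausdorff_half_le_sqrt2_max {A A1 A2 B B1 B2} :
  hausdorff_half_adherent A1 B1 -> hausdorff_half_adherent A2 B2 ->
  (forall a, A a -> exists a1 a2, [/\ A1 a1, A2 a2 & forall b1 b2, B1 b1 -> B2 b2 ->
     exists2 b, B b & sqdist a b <= sqdist a1 b1 + sqdist a2 b2]) ->
  hausdorff_half A B <=
    Num.sqrt 2 * Num.max (hausdorff_half A1 B1) (hausdorff_half A2 B2).
Proof.
move=> adh1 adh2 splitA; set M := Num.max _ _.
have M0 : 0 <= M by rewrite le_max hausdorff_half_ge0.
apply: hausdorff_half_le => [|a Aa e e0]; first by rewrite mulr_ge0 ?sqrtr_ge0.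
have e'0 : 0 < e / Num.sqrt 2 by rewrite divr_gt0 // sqrtr_gt0 ltr0n.
have [a1 [a2 [A1a1 A2a2 combine]]] := splitA a Aa.
have [b1 B1b1 h1] := adh1 a1 _ A1a1 e'0.
have [b2 B2b2 h2] := adh2 a2 _ A2a2 e'0.
have [b Bb hb] := combine b1 b2 B1b1 B2b2.
exists b => //; apply: edist_le_sqrt2 M0 e0 hb _ _; apply/ltW.
  by apply: lt_le_trans h1 _; rewrite lerD2r le_max lexx.
by apply: lt_le_trans h2 _; rewrite lerD2r le_max lexx orbT.
Qed.

Lemma cut_sub_cut0 u a : 0 < a -> cut u a `<=` cut u 0.
Proof.
rewrite /cut ltxx => a0; rewrite a0 => x ax.
by apply: subset_closure; exact: lt_le_trans a0 ax.
Qed.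

Lemma sendographP {u x t} : fuzzy_set u ->
  sendograph u (x, t) <-> 0 <= t <= 1 /\ cut u t x.
Proof.
move=> fu; split.
  move=> [x0 [t01 tu]]; split => //.
  by rewrite /cut; case: ifP => // _; move: x0; rewrite /cut ltxx.
move=> [t01 xt]; have /andP[t0 _] := t01.
have [tp|] := ltP 0 t.
  by split; [exact: cut_sub_cut0 tp _ xt | move: xt; rewrite /cut tp].
move=> t_le0; have t_eq0 : t = 0 by apply/eqP; rewrite eq_le t_le0 t0.
by subst t; split => //; split => //; have /andP[] := fu x.
Qed.

Lemma sendograph_lower u x t m : sendograph u (x, t) -> 0 <= m <= t ->
  sendograph u (x, m).
Proof.
move=> [x0 [/andP[_ t1] tu]] /andP[m0 mt].
by split => //; split; [rewrite m0 (le_trans mt t1) | exact: le_trans mt tu].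
Qed.

Lemma fuzzy_number_cut0 {u} : fuzzy_number u -> cut u 0 !=set0 /\ compact (cut u 0).
Proof. by move=> [_ hu]; have [? [? _]] := hu 0 (introT andP (conj (lexx 0) ler01)). Qed.

Lemma sendograph_neq0 {u} : fuzzy_number u -> sendograph u !=set0.
Proof.
move=> hu; have [[x x0] _] := fuzzy_number_cut0 hu.
exists (x, 0); split => //; split; first by rewrite lexx ler01.
by have /andP[] := hu.1 x.
Qed.

Lemma sendograph_bounded {u} b : fuzzy_number u ->
  exists K, forall a, sendograph u a -> Defs.edist a b <= K.
Proof.
move=> /fuzzy_number_cut0[_ /compact_bounded[M [_ HM]]].
have {}HM x : cut u 0 x -> `|x| <= `|M| + 1.
  by apply: HM; rewrite (le_lt_trans (ler_norm M)) // ltrDl.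
exists (Num.sqrt (\sum_(i < p) (`|M| + 1 + `|b.1 ord0 i|) ^+ 2 + (1 + `|b.2|) ^+ 2)).
move=> [x t] /= [x0 [/andP[t0 t1] _]]; rewrite edistE; apply/ler_wsqrtr/lerD.
  apply: ler_sum => i _; apply: sqrB_le_sqrD (lexx _).
  exact: le_trans (normr_mx_coord_le x ord0 i) (HM _ x0).
by apply: sqrB_le_sqrD; rewrite ?(ger0_norm t0).
Qed.

Lemma sendograph_min_cuts {u v x y t1 t2} : fuzzy_set u -> fuzzy_set v ->
  sendograph u (x, t1) -> sendograph v (y, t2) ->
  [/\ 0 <= Num.min t1 t2 <= 1, cut u (Num.min t1 t2) x & cut v (Num.min t1 t2) y].
Proof.
move=> fu fv hx hy.
have [_ [/andP[t1_0 t1_1] _]] := hx; have [_ [/andP[t2_0 _] _]] := hy.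
have m_ge0 : 0 <= Num.min t1 t2 by rewrite le_min t1_0.
have /(sendographP fu)[m01 xm] : sendograph u (x, Num.min t1 t2).
  by apply: sendograph_lower hx _; rewrite m_ge0 ge_min lexx.
have /(sendographP fv)[_ ym] : sendograph v (y, Num.min t1 t2).
  by apply: sendograph_lower hy _; rewrite m_ge0 ge_min lexx orbT.
by [].
Qed.

Lemma sendograph_convex w (al : R) y z t1 t2 : fuzzy_number w -> 0 <= al <= 1 ->
  sendograph w (y, t1) -> sendograph w (z, t2) ->
  sendograph w (al *: y + (1 - al) *: z, Num.min t1 t2).
Proof.
move=> [fw hw] al01 hy hz; have [m01 ym zm] := sendograph_min_cuts fw fw hy hz.
by apply/sendographP => //; split => //; apply: (hw _ m01).2.2.
Qed.

Lemma sendograph_fuzzy_sum {a b : R} {u v au bv s y z t1 t2} :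
  fuzzy_set u -> fuzzy_set v -> fuzzy_set s ->
  is_fuzzy_scale a u au -> is_fuzzy_scale b v bv -> is_fuzzy_add au bv s ->
  sendograph u (y, t1) -> sendograph v (z, t2) ->
  sendograph s (a *: y + b *: z, Num.min t1 t2).
Proof.
move=> fu fv fs [_ hau] [_ hbv] [_ hs] hy hz.
have [m01 ym zm] := sendograph_min_cuts fu fv hy hz.
apply/sendographP => //; split => //; rewrite hs //.
by exists (a *: y); [rewrite hau //; exists y | exists (b *: z); rewrite ?hbv //; exists z].
Qed.

Lemma sendograph_fuzzy_sumP {a b : R} {u v au bv s x t} :
  fuzzy_set u -> fuzzy_set v -> fuzzy_set s ->
  is_fuzzy_scale a u au -> is_fuzzy_scale b v bv -> is_fuzzy_add au bv s ->
  sendograph s (x, t) ->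
  exists y z, [/\ x = a *: y + b *: z, sendograph u (y, t) & sendograph v (z, t)].
Proof.
move=> fu fv fs [_ hau] [_ hbv] [_ hs] /(sendographP fs)[t01].
rewrite hs // => -[y' hy' [z' hz' ->]]; move: hy' hz'.
rewrite hau ?hbv // => -[y yt <-] [z zt <-].
by exists y, z; split => //; apply/sendographP.
Qed.

Lemma sendograph_adherent {u w} : fuzzy_number u -> fuzzy_number w ->
  hausdorff_half_adherent (sendograph u) (sendograph w).
Proof.
move=> hu hw; have [b0 wb0] := sendograph_neq0 hw.
have [K Kb0] := sendograph_bounded b0 hu.
exact: hausdorff_half_adherent_of_bounded wb0 Kb0.
Qed.

Lemma hausdorff_half_le_send_metric u w :
  hausdorff_half (sendograph u) (sendograph w) <= send_metric u w /\
  hausdorff_half (sendograph w) (sendograph u) <= send_metric u w.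
Proof. by rewrite /send_metric /hausdorff !le_max !lexx ?orbT. Qed.

End Sendograph.

Theorem corollary2p1 (R : realType) (p : nat) (hp : (1 <= p)%N)
  (u v w : 'rV[R]_p -> R)
  (hu : fuzzy_number u) (hv : fuzzy_number v) (hw : fuzzy_number w)
  (alpha : R) (halpha : 0 <= alpha <= 1)
  (au bv s : 'rV[R]_p -> R)
  (hau : is_fuzzy_scale alpha u au)
  (hbv : is_fuzzy_scale (1 - alpha) v bv)
  (hs : is_fuzzy_add au bv s) :
  send_metric s w <= Num.sqrt 2 * Num.max (send_metric u w) (send_metric v w).
Proof.
have [[fu fv] fs] := (hu.1, hv.1, hs.1).
have [Duw Dwu] := hausdorff_half_le_send_metric u w.
have [Dvw Dwv] := hausdorff_half_le_send_metric v w.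
rewrite /send_metric /hausdorff ge_max; apply/andP; split.
- apply: le_trans (hausdorff_half_le_sqrt2_max
    (sendograph_adherent hu hw) (sendograph_adherent hv hw) _) _.
    move=> [x t] /(sendograph_fuzzy_sumP fu fv fs hau hbv hs)[y [z [-> hy hz]]].
    exists (y, t), (z, t); split => // -[y' t1] [z' t2] hy' hz'.
    exists (alpha *: y' + (1 - alpha) *: z', Num.min t1 t2).
      exact: sendograph_convex.
    exact: sqdist_convex_le.
  by rewrite ler_wpM2l ?sqrtr_ge0 ?le_max2.
- apply: le_trans (hausdorff_half_le_sqrt2_max
    (sendograph_adherent hw hu) (sendograph_adherent hw hv) _) _.
    move=> [x t] wxt; exists (x, t), (x, t); split => // -[y t1] [z t2] hy hz.
    exists (alpha *: y + (1 - alpha) *: z, Num.min t1 t2).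
      exact: sendograph_fuzzy_sum fu fv fs hau hbv hs hy hz.
    have xE : alpha *: x + (1 - alpha) *: x = x by rewrite -scalerDl addrC subrK scale1r.
    by rewrite -{1}xE; exact: sqdist_convex_le.
  by rewrite ler_wpM2l ?sqrtr_ge0 ?le_max2.
Qed.
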